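(* Let $Y\in\mathbb{C}^{(n\times n)\cdot d}$, let $f$ be an NC function uniformly analytic in a uniformly open neighbourhood of $Y$, with Taylor–Taylor coefficients $\hat f_{\alpha,\beta;\omega}$ at $Y$ as in the context, and for $1\le a,b\le n$ let $f_{a,b}$ be the formal power series in $dn^2$ non-commuting variables $\{\mathfrak{z}_{i,j,k}:1\le i,j\le n,1\le k\le d\}$, $$f_{a,b}=\sum_{\ell\ge0}\ \sum_{\substack{\alpha=a_0\cdots a_{\ell-1},\ \beta=b_0\cdots b_{\ell-1}\in\mathbb{F}^+_n\\ \omega=w_1\cdots w_\ell\in\mathbb{F}^+_d}}\hat f_{\alpha a,\beta b;\omega}\ \mathfrak{z}_{a_0,b_0,w_1}\mathfrak{z}_{a_1,b_1,w_2}\cdots\mathfrak{z}_{a_{\ell-1},b_{\ell-1},w_\ell}.$$ Then for every $1\le a,b\le n$ the radius of convergence $R_{a,b}$ of $f_{a,b}$ at $0$ is positive.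
   Context: $\mathbb{C}^{(k\times k)\cdot d}$ denotes column $d$-tuples of $k\times k$ matrices with $\|X\|_{\mathrm{col}}$ the operator norm of the stacked matrix; the uniform topology is generated by the sets $\bigsqcup_m\{X\in\mathbb{C}^{(mk\times mk)\cdot d}:\|X-I_m\otimes Z\|_{\mathrm{col}}<r\}$. An NC function is a map on a direct-sum-closed set that is graded, respects direct sums and joint similarities; it is uniformly analytic if its domain is uniformly open and it is locally bounded in the uniform topology. Such $f$ has a Taylor–Taylor expansion at $Y$: unique $|\omega|$-linear maps $f_\omega:(\mathbb{C}^{n\times n})^{|\omega|}\to\mathbb{C}^{n\times n}$ ($\omega\in\mathbb{F}^+_d$, the free monoid on $\{1,\dots,d\}$) with $f(X)=\sum_\omega f_\omega\circ(X-I_m\otimes Y)^{\odot\omega}$ near $Y$ (blockwise application to Haagerup products of $m\times m$ block matrices). Each $f_\omega$ with $|\omega|=\ell$ is written uniquely as $f_\omega(G_1,\dots,G_\ell)=\sum\hat f_{\alpha,\beta;\omega}E_{a_0,b_0}G_1E_{a_1,b_1}\cdots G_\ell E_{a_\ell,b_\ell}$, summing over $\alpha=a_0\cdots a_\ell,\beta=b_0\cdots b_\ell\in\mathbb{F}^+_n$, with $E_{i,j}$ the matrix units. The radius of convergence at $0$ of a formal power series $g=\sum_\nu\hat g_\nu\mathfrak{z}^\nu$ in $N$ non-commuting variables is $R_g$ with $1/R_g=\limsup_{\ell\to\infty}\big(\sum_{|\nu|=\ell}|\hat g_\nu|^2\big)^{1/(2\ell)}$. *)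

From HB Require Import structures.
From mathcomp Require Import all_boot all_order all_algebra.
From mathcomp Require Import complex mxtens.
From mathcomp Require Import boolp classical_sets reals ereal topology sequences exp.
Set Implicit Arguments. Unset Strict Implicit. Unset Printing Implicit Defensive.
Import Order.TTheory GRing.Theory Num.Theory.
Local Open Scope ring_scope.
Local Open Scope classical_set_scope.

Section NC.
Variable R : realType.
Local Notation C := R[i].

Definition normsq (z : C) : R := complex.Re z ^+ 2 + complex.Im z ^+ 2.

Definition vsq N (v : 'cV[C]_N) : R := \sum_(i < N) normsq (v i 0).

(* ||X||_col : operator norm of the column-stacked d-tuple X *)
Definition colnorm d N (X : 'I_d -> 'M[C]_N) : R :=
  sup [set t | exists v : 'cV[C]_N, vsq v <= 1 /\
                 t = Num.sqrt (\sum_(k < d) vsq (X k *m v))].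

Definition opnorm N (A : 'M[C]_N) : R := colnorm (fun _ : 'I_1 => A).

(* block matrices : the (i,a)-th row of an (m*k)x(m*k) matrix is i*k+a *)
Definition blockmx_of m k (B : 'I_m -> 'I_m -> 'M[C]_k) : 'M[C]_(m * k) :=
  \matrix_(p, q) B (mxtens_unindex p).1 (mxtens_unindex q).1
                   (mxtens_unindex p).2 (mxtens_unindex q).2.

Definition block m k (M : 'M[C]_(m * k)) (i j : 'I_m) : 'M[C]_k :=
  \matrix_(a, b) M (mxtens_index (i, a)) (mxtens_index (j, b)).

Definition ampl m k (Z : 'M[C]_k) : 'M[C]_(m * k) :=
  blockmx_of (fun i j : 'I_m => if i == j then Z else 0).

Arguments ampl m {k}.

Definition inball d m k (Z : 'I_d -> 'M[C]_k) (r : R)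
    (X : 'I_d -> 'M[C]_(m * k)) : Prop :=
  colnorm (fun s => X s - ampl m (Z s)) < r.

Arguments inball {d} m {k}.

Definition ncset d := forall N : nat, set ('I_d -> 'M[C]_N).
Definition ncmap d := forall N : nat, ('I_d -> 'M[C]_N) -> 'M[C]_N.

Definition dsum d N M (X : 'I_d -> 'M[C]_N) (Z : 'I_d -> 'M[C]_M)
  : 'I_d -> 'M[C]_(N + M) := fun s => block_mx (X s) 0 0 (Z s).

Definition dsum_closed d (Om : ncset d) : Prop :=
  forall N M X Z, Om N X -> Om M Z -> Om (N + M)%N (dsum X Z).

(* NC function: graded (by its type), respects direct sums and similarities *)
Definition nc_function d (Om : ncset d) (f : ncmap d) : Prop :=
  [/\ dsum_closed Om,
      (forall N M X Z, Om N X -> Om M Z ->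
         f (N + M)%N (dsum X Z) = block_mx (f N X) 0 0 (f M Z)) &
      (forall N X (S : 'M[C]_N), S \in unitmx -> Om N X ->
         Om N (fun s => S *m X s *m invmx S) ->
         f N (fun s => S *m X s *m invmx S) = S *m f N X *m invmx S)].

(* open in the uniform topology (the basic sets form a base) *)
Definition uniformly_open d (Om : ncset d) : Prop :=
  forall N X, Om N X -> exists2 r : R, 0 < r &
    forall m, (0 < m)%N -> forall X', inball m X r X' -> Om (m * N)%N X'.

Definition locally_bounded d (Om : ncset d) (f : ncmap d) : Prop :=
  forall N X, Om N X -> exists2 r : R, 0 < r & exists M : R,
    forall m, (0 < m)%N -> forall X', inball m X r X' ->
      Om (m * N)%N X' /\ opnorm (f (m * N)%N X') <= M.

Definition unif_analytic d (Om : ncset d) (f : ncmap d) : Prop :=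
  uniformly_open Om /\ locally_bounded Om f.

(* E_{a0,b0} G_1 E_{a1,b1} ... G_l E_{al,bl} *)
Definition chain n l (al be : (l.+1).-tuple 'I_n) (G : 'I_l -> 'M[C]_n)
  : 'M[C]_n :=
  foldl (fun M k => M *m G k *m
           delta_mx (tnth al (lift ord0 k)) (tnth be (lift ord0 k)))
        (delta_mx (tnth al ord0) (tnth be ord0)) (enum 'I_l).

(* the |w|-linear map f_w determined by the coefficients fhat_{al,be;w} *)
Definition TTmap d n (fhat : seq 'I_d -> seq 'I_n -> seq 'I_n -> C) l
    (w : l.-tuple 'I_d) (G : 'I_l -> 'M[C]_n) : 'M[C]_n :=
  \sum_(al : (l.+1).-tuple 'I_n) \sum_(be : (l.+1).-tuple 'I_n)
     fhat w al be *: chain al be G.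

(* f_w o (H_1 (.) ... (.) H_l) applied blockwise, H_k = Delta_{w_k} *)
Definition haag d n (fhat : seq 'I_d -> seq 'I_n -> seq 'I_n -> C) m l
    (w : l.-tuple 'I_d) (Delta : 'I_d -> 'M[C]_(m * n)) : 'M[C]_(m * n) :=
  blockmx_of (fun i j : 'I_m =>
    \sum_(p : {ffun 'I_l.+1 -> 'I_m} | (p ord0 == i) && (p ord_max == j))
      TTmap fhat w (fun k => block (Delta (tnth w k))
                               (p (widen_ord (leqnSn l) k)) (p (lift ord0 k)))).

(* partial sums sum_{|w| < L} f_w o (X - I_m (x) Y)^{(.) w} *)
Definition TTsum d n (fhat : seq 'I_d -> seq 'I_n -> seq 'I_n -> C)
    (Y : 'I_d -> 'M[C]_n) m (X : 'I_d -> 'M[C]_(m * n)) (L : nat)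
  : 'M[C]_(m * n) :=
  \sum_(l < L) \sum_(w : l.-tuple 'I_d)
     haag fhat w (fun s => X s - ampl m (Y s)).

(* fhat are the Taylor-Taylor coefficients of f at Y : the TT series
   converges entrywise to f on a basic uniform neighbourhood of Y in Om *)
Definition TT_expansion d n (Om : ncset d) (f : ncmap d) (Y : 'I_d -> 'M[C]_n)
    (fhat : seq 'I_d -> seq 'I_n -> seq 'I_n -> C) : Prop :=
  exists2 r : R, 0 < r & forall m, (0 < m)%N ->
    forall X : 'I_d -> 'M[C]_(m * n), inball m Y r X ->
      Om (m * n)%N X /\
      forall p q (eps : R), 0 < eps -> exists L0 : nat, forall L, (L0 <= L)%N ->
        normsq ((TTsum fhat Y X L) p q - f (m * n)%N X p q) < eps.

(* radius of convergence at 0 of a formal power series in non-commuting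
   variables indexed by the finite type V: 1/R = limsup (sum |g_nu|^2)^(1/2l) *)
Definition radius (V : finType) (g : seq V -> C) : \bar R :=
  let L := limn_esup (fun l : nat =>
     ((\sum_(nu : l.-tuple V) normsq (g nu)) `^ ((2 * l)%:R)^-1)%:E) in
  if L == 0%E then +oo%E else if L == +oo%E then 0%E else ((fine L)^-1)%:E.

(* the series f_{a,b} in the variables z_{i,j,k}, V = 'I_n * 'I_n * 'I_d *)
Definition fab d n (fhat : seq 'I_d -> seq 'I_n -> seq 'I_n -> C) (a b : 'I_n)
  : seq ('I_n * 'I_n * 'I_d) -> C :=
  fun nu => fhat (map (fun v => v.2) nu)
                 (rcons (map (fun v => v.1.1) nu) a)
                 (rcons (map (fun v => v.1.2) nu) b).

End NC.

(* Cauchy estimates.  Given a word nu = (a_0,b_0,w_1) ... (a_{l-1},b_{l-1},w_l), put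
   a_l = a, b_l = b and let D be the (l+1) x (l+1) block tuple whose (k, k+1) block in
   coordinate w_{k+1} is t E_{b_k,a_{k+1}}, all other blocks being 0; its column norm is at
   most t.  In the Taylor-Taylor series of f at X = I (x) Y + D, the ((0,a_0), (l,b_l)) entry
   only receives a contribution from the word w_1 ... w_l along the block path 0, 1, ..., l,
   where the chain E_{a_0,b_0} E_{b_0,a_1} E_{a_1,b_1} ... collapses to E_{a_0,b_l}; so this
   entry of f(X) equals t^l fhat_{alpha a, beta b; omega}.  If f is bounded by M on a uniform
   ball of radius r > t around Y, this gives |fhat_nu| <= M t^-l, hence
   sum_{|nu| = l} |fhat_nu|^2 <= (d n^2 max(1, M^2) / t^2)^l, and R_{a,b} > 0. *)

From Pilot Require Import Defs.
From HB Require Import structures.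
From mathcomp Require Import all_boot all_order all_algebra.
From mathcomp Require Import complex mxtens.
From mathcomp Require Import boolp classical_sets reals ereal topology sequences exp.
From mathcomp Require normedtype.
Import Order.TTheory GRing.Theory Num.Theory.
Set Implicit Arguments. Unset Strict Implicit.
Local Open Scope ring_scope.

Section Norms.
Variable R : realType.
Local Notation C := R[i].
Local Notation normc := (@Normc.normc R).
Local Open Scope complex_scope.

Lemma normsq_ge0 (z : C) : 0 <= normsq z.
Proof. by rewrite /normsq addr_ge0 // sqr_ge0. Qed.

Lemma normc_ge0 (z : C) : 0 <= normc z.
Proof. by case: z => x y; rewrite sqrtr_ge0. Qed.

Lemma normsqE (z : C) : normsq z = normc z ^+ 2.
Proof. by case: z => x y; rewrite /normsq /= sqr_sqrtr // addr_ge0 // sqr_ge0. Qed.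

Lemma normsq_eq0 (z : C) : normsq z = 0 -> z = 0.
Proof.
case: z => x y; rewrite /normsq /= => /eqP.
by rewrite paddr_eq0 ?sqr_ge0 // !sqrf_eq0 => /andP[/eqP -> /eqP ->].
Qed.

Lemma normsq_realM (t : R) (z : C) : normsq (t%:C * z) = t ^+ 2 * normsq z.
Proof. by case: z => x y; rewrite /normsq /= !mul0r !subr0 !addr0 !exprMn mulrDr. Qed.

Lemma vsq_ge0 N (v : 'cV[C]_N) : 0 <= vsq v.
Proof. by apply: sumr_ge0 => i _; exact: normsq_ge0. Qed.

Lemma normc_sum_le (I : Type) (r : seq I) (F : I -> C) :
  normc (\sum_(i <- r) F i) <= \sum_(i <- r) normc (F i).
Proof.
elim/big_ind2: _ => [|x1 x2 y1 y2 le1 le2|//]; first by rewrite Normc.normc0.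
exact: le_trans (le_normcD _ _) (lerD le1 le2).
Qed.

Lemma vsq_mulmx_le N (A : 'M[C]_N) (v : 'cV[C]_N) : vsq v <= 1 ->
  vsq (A *m v) <= \sum_(p < N) (\sum_(q < N) normc (A p q)) ^+ 2.
Proof.
move=> v_le1; apply: ler_sum => p _; rewrite normsqE mxE.
have entry_le1 q : normc (v q 0) <= 1.
  rewrite -(ler_pXn2r (_ : 0 < 2)%N) ?nnegrE ?normc_ge0 ?ler01 // expr1n -normsqE.
  apply: le_trans v_le1; rewrite /vsq (bigD1 q) //= lerDl.
  by apply: sumr_ge0 => *; exact: normsq_ge0.
rewrite ler_pXn2r ?nnegrE ?normc_ge0 //; last by apply: sumr_ge0 => *; exact: normc_ge0.
apply: le_trans (normc_sum_le _ _) _; apply: ler_sum => q _.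
by rewrite Normc.normcM ler_piMr ?normc_ge0.
Qed.

Lemma sqrt_normsq_le_opnorm N (A : 'M[C]_N) p q :
  Num.sqrt (normsq (A p q)) <= opnorm A.
Proof.
have ub : has_ubound [set t | exists v : 'cV_N, vsq v <= 1 /\
                        t = Num.sqrt (\sum_(k < 1) vsq (A *m v))].
  exists (Num.sqrt (\sum_(p < N) (\sum_(q < N) normc (A p q)) ^+ 2)).
  move=> _ [v [v_le1 ->]]; rewrite big_ord1 ler_sqrt ?vsq_mulmx_le //.
  by apply: sumr_ge0 => *; rewrite sqr_ge0.
apply: le_trans (ub_le_sup ub _); last first.
  exists (delta_mx q 0); split => //; rewrite /vsq (bigD1 q) //= big1 ?addr0.
    by rewrite mxE !eqxx /normsq /= expr1n expr0n /= addr0.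
  by move=> i /negbTE i_neq; rewrite mxE i_neq /normsq /= expr0n /= addr0.
rewrite big_ord1 ler_sqrt ?vsq_ge0 // /vsq (bigD1 p) //= -[X in X <= _]addr0 lerD //.
  rewrite mxE (bigD1 q) //= mxE !eqxx mulr1 big1 ?addr0 //.
  by move=> j /negbTE j_neq; rewrite mxE j_neq mulr0.
by apply: sumr_ge0 => *; exact: normsq_ge0.
Qed.

Lemma eventually_const_normsq_lim (u : nat -> C) (v z : C) (L1 : nat) :
    (forall L, (L1 <= L)%N -> u L = v) ->
    (forall eps, 0 < eps -> exists L0, forall L, (L0 <= L)%N -> normsq (u L - z) < eps) ->
  v = z.
Proof.
move=> u_const u_cvg; apply/eqP; rewrite -subr_eq0; apply/eqP/normsq_eq0/le_anti.
rewrite normsq_ge0 andbT leNgt; apply/negP => /u_cvg[L0 uL0].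
by have := uL0 _ (leq_maxl L0 L1); rewrite u_const ?leq_maxr // ltxx.
Qed.

End Norms.

Section LimnEsup.
(* Imported only here: normedtype also defines a [radius], shadowing the one of Defs. *)
Import normedtype.
Variable R : realType.

Lemma limn_esup_bounds (u : (\bar R)^nat) (B : R) :
  (forall l, (0 <= u l)%E) -> (forall l, (0 < l)%N -> (u l <= B%:E)%E) ->
  (0 <= limn_esup u)%E /\ (limn_esup u <= B%:E)%E.
Proof.
move=> u_ge0 u_leB; rewrite limn_esup_lim; split.
  apply: lime_ge; first exact: is_cvg_esups.
  apply: nearW => k; apply: le_trans (u_ge0 k) _.
  by apply: ereal_sup_ubound; exists k => /=.
apply: lime_le; first exact: is_cvg_esups.
near=> k; apply: ge_ereal_sup => _ [j /= jk <-]; apply: u_leB.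
apply: leq_trans jk; near: k; by exists 1%N.
Unshelve. all: by end_near. Qed.
End LimnEsup.

Section Radius.
Variable R : realType.
Local Notation C := R[i].

Lemma radius_gt0 (V : finType) (g : seq V -> C) (K : R) : 0 <= K ->
    (forall l, (0 < l)%N -> \sum_(nu : l.-tuple V) normsq (g nu) <= K ^+ l) ->
  (0 < radius g)%E.
Proof.
move=> K_ge0 gK.
pose u l := ((\sum_(nu : l.-tuple V) normsq (g nu)) `^ ((2 * l)%:R)^-1)%:E.
have root_le l : (0 < l)%N -> (u l <= (K `^ 2^-1)%:E)%E.
  rewrite lee_fin => l_gt0; apply: le_trans (ge0_ler_powR _ _ _ (gK l l_gt0)) _.
  - by rewrite invr_ge0 ler0n.
  - by rewrite nnegrE sumr_ge0 // => nu _; exact: normsq_ge0.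
  - by rewrite nnegrE exprn_ge0.
  rewrite -powR_mulrn // -powRrM natrM invfM mulrCA mulfV ?mulr1 //.
  by rewrite pnatr_eq0 -lt0n.
have [L_ge0 L_le] := limn_esup_bounds (u := u) (fun l => powR_ge0 _ _) root_le.
rewrite /radius; set L := limn_esup _ in L_ge0 L_le *.
case: ifP => // /negbT L_neq0; case: ifP => [/eqP L_oo|_]; first by rewrite L_oo in L_le.
move: L_ge0 L_le L_neq0; case: L => [r||] //= r_ge0 _ r_neq0.
by rewrite lte_fin invr_gt0 lt_def -lee_fin r_ge0 andbT.
Qed.

End Radius.

Section Chain.
Variables (R : realType) (n : nat).
Local Notation C := R[i].

Lemma foldl_map (T S S' : Type) (F : T -> S' -> T) (h : S -> S') x s :
  foldl F x (map h s) = foldl (fun a b => F a (h b)) x s.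
Proof. by elim: s x => //= b s IH x. Qed.

Lemma foldl_delta_mx (c : C) (U V X Q : nat -> 'I_n) (p : 'I_n) len j (g : C) :
  foldl (fun M k => M *m (c *: delta_mx (U k) (V k)) *m delta_mx (X k) (Q k.+1))
     (g *: delta_mx p (Q j)) (iota j len)
  = (if all (fun k => (Q k == U k) && (V k == X k)) (iota j len)
     then g * c ^+ len else 0) *: delta_mx p (Q (j + len)%N).
Proof.
elim: len j g => [|len IH] j g /=; first by rewrite expr0 mulr1 addn0.
rewrite -!scalemxAl -!scalemxAr -!scalemxAl scalerA -addSnnS.
have [QU|QU] /= := eqVneq (Q j) (U j); last first.
  rewrite mul_delta_mx_cond (negbTE QU) mulr0n mul0mx scaler0.
  by rewrite -(scale0r (delta_mx p (Q j.+1))) IH; case: ifP; rewrite ?mul0r scale0r.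
have [VX|VX] /= := eqVneq (V j) (X j).
  by rewrite QU mul_delta_mx VX mul_delta_mx IH exprS mulrA [g * c]mulrC.
rewrite QU mul_delta_mx mul_delta_mx_cond (negbTE VX) mulr0n !scaler0.
by rewrite -(scale0r (delta_mx p (Q j.+1))) IH; case: ifP; rewrite ?mul0r scale0r.
Qed.

Lemma foldl_mulmx_eq0 (I : eqType) (G E : I -> 'M[C]_n) (s : seq I) (M : 'M[C]_n) k :
  k \in s -> G k = 0 -> foldl (fun M k => M *m G k *m E k) M s = 0.
Proof.
have foldl0 s' : foldl (fun (M : 'M[C]_n) k => M *m G k *m E k) 0 s' = 0.
  by elim: s' => //= k' s' IH; rewrite !mul0mx.
elim: s M => //= k' s IH M; rewrite inE => /orP[/eqP <- Gk|ks Gk].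
  by rewrite Gk mulmx0 mul0mx foldl0.
exact: IH.
Qed.

Lemma chain_eq0 l (al be : (l.+1).-tuple 'I_n) (G : 'I_l -> 'M[C]_n) k :
  G k = 0 -> chain al be G = 0.
Proof. exact: foldl_mulmx_eq0 (mem_enum _ k). Qed.

Lemma chain_delta_mx l (al be : (l.+1).-tuple 'I_n) (G : 'I_l -> 'M[C]_n)
    (c : C) (U V : nat -> 'I_n) x0 :
    (forall k : 'I_l, G k = c *: delta_mx (U k) (V k)) ->
  chain al be G =
  (if all (fun k => (nth x0 be k == U k) && (V k == nth x0 al k.+1)) (iota 0 l)
   then c ^+ l else 0) *: delta_mx (tnth al ord0) (tnth be ord_max).
Proof.
move=> G_delta; rewrite /chain -(scale1r (delta_mx _ (tnth be ord0))).
pose F (M : 'M[C]_n) (k : nat) :=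
  M *m (c *: delta_mx (U k) (V k)) *m delta_mx (nth x0 al k.+1) (nth x0 be k.+1).
rewrite (_ : (fun M k => _) = fun M (k : 'I_l) => F M k); last first.
  by apply: funext => M; apply: funext => k; rewrite G_delta !(tnth_nth x0).
by rewrite -foldl_map val_enum_ord (tnth_nth x0 be ord0) foldl_delta_mx mul1r
  (tnth_nth x0 be ord_max).
Qed.

End Chain.

Section Shift.
Variables (R : realType) (n d l : nat) (t : R).
Variables (A B : nat -> 'I_n) (W : nat -> 'I_d).
Local Notation C := R[i].
Local Notation I := 'I_(l.+1 * n).
Local Open Scope complex_scope.

Definition shift_active (P : I) : bool :=
  ((mxtens_unindex P).1 < l)%N && ((mxtens_unindex P).2 == B (mxtens_unindex P).1).

Definition shift_target (P : I) : I :=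
  mxtens_index (inord (mxtens_unindex P).1.+1 : 'I_l.+1, A (mxtens_unindex P).1.+1).

Definition shift_tuple (s : 'I_d) : 'M[C]_(l.+1 * n) :=
  \matrix_(P, Q) if shift_active P && (W (mxtens_unindex P).1 == s) && (Q == shift_target P)
                 then t%:C else 0.

Lemma block_shift_tuple s (i j : 'I_l.+1) :
  block (shift_tuple s) i j = if (i < l)%N && (W i == s) && (j == inord i.+1)
                              then t%:C *: delta_mx (B i) (A i.+1) else 0.
Proof.
apply/matrixP => x y; rewrite !mxE /shift_active /shift_target !mxtens_indexK /=.
rewrite (inj_eq (can_inj (@mxtens_indexK _ _))) xpair_eqE.
case: (i < l)%N; case: (W i == s); case: (j == _); rewrite /= ?mxE;
  by case: (x == B i); case: (y == A i.+1); rewrite /= ?mulr1 ?mulr0.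
Qed.

Lemma shift_tuple_mulmx s (v : 'cV[C]_(l.+1 * n)) P :
  (shift_tuple s *m v) P 0 = if shift_active P && (W (mxtens_unindex P).1 == s)
                             then t%:C * v (shift_target P) 0 else 0.
Proof.
rewrite mxE; case: ifP => act; last by rewrite big1 // => Q _; rewrite mxE act mul0r.
rewrite (bigD1 (shift_target P)) //= mxE act eqxx big1 ?addr0 // => Q Q_neq.
by rewrite mxE act /= (negbTE Q_neq) mul0r.
Qed.

Lemma shift_target_inj : {in shift_active &, injective shift_target}.
Proof.
move=> P1 P2; rewrite /shift_active /shift_target !unfold_in.
rewrite -[P1](mxtens_unindexK) -[P2](mxtens_unindexK) !mxtens_indexK.
case: (mxtens_unindex P1) => [i1 x1]; case: (mxtens_unindex P2) => [i2 x2] /=.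
move=> /andP[i1_lt /eqP ->] /andP[i2_lt /eqP ->] /(can_inj (@mxtens_indexK _ _)) [].
by move=> /(congr1 val); rewrite /= !inordK ?ltnS // => -[] /val_inj ->.
Qed.

Lemma colnorm_shift_tuple_le : 0 <= t -> colnorm shift_tuple <= t.
Proof.
move=> t_ge0; apply: ge_sup.
  exists (Num.sqrt (\sum_(k < d) vsq (shift_tuple k *m 0))), 0; split => //.
  by rewrite /vsq big1 // => i _; rewrite mxE /normsq /= expr0n /= addr0.
move=> _ [v [v_le1 ->]].
rewrite -(ger0_norm t_ge0) -sqrtr_sqr ler_sqrt ?sqr_ge0 //.
have -> : \sum_(k < d) vsq (shift_tuple k *m v) =
    \sum_(P < l.+1 * n | shift_active P) t ^+ 2 * normsq (v (shift_target P) 0).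
  rewrite [RHS]big_mkcond /vsq exchange_big /=; apply: eq_bigr => P _.
  under eq_bigr do rewrite shift_tuple_mulmx.
  case: ifP => act /=; last by rewrite big1 // => s _; rewrite /normsq /= expr0n /= addr0.
  rewrite (bigD1 (W (mxtens_unindex P).1)) //= eqxx normsq_realM big1 ?addr0 //.
  by move=> s /negbTE s_neq; rewrite eq_sym s_neq /normsq /= expr0n /= addr0.
rewrite -mulr_sumr -[X in _ <= X]mulr1 ler_wpM2l ?sqr_ge0 //; apply: le_trans v_le1.
rewrite -(big_imset (fun Q => normsq (v Q 0)) shift_target_inj) /=.
rewrite [X in _ <= X](bigID [in shift_target @: shift_active]) /= lerDl.
by apply: sumr_ge0 => *; exact: normsq_ge0.
Qed.

End Shift.

Lemma unit_step_path_val l' l (p : 'I_l'.+1 -> 'I_l.+1) : val (p ord0) = 0%N ->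
    (forall k : 'I_l', val (p (lift ord0 k)) = (val (p (widen_ord (leqnSn l') k))).+1) ->
  forall k, val (p k) = val k.
Proof.
move=> p0 p_step; suff p_val j (k : 'I_l'.+1) : val k = j -> val (p k) = j.
  by move=> k; exact: p_val.
elim: j k => [|j IH] k k_val; first by rewrite (_ : k = ord0) //; apply: val_inj.
have j_lt : (j < l')%N by rewrite -ltnS -k_val ltn_ord.
have -> : k = lift ord0 (Ordinal j_lt) by apply: val_inj; rewrite /= k_val.
by rewrite p_step (IH (widen_ord _ (Ordinal j_lt))).
Qed.

Section ShiftCorner.
Variables (R : realType) (n d : nat) (fhat : seq 'I_d -> seq 'I_n -> seq 'I_n -> R[i]).
Variables (l : nat) (t : R) (A B : nat -> 'I_n) (W : nat -> 'I_d).
Variables (om : l.-tuple 'I_d) (al be : (l.+1).-tuple 'I_n).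
Hypothesis om_W : forall k : 'I_l, tnth om k = W k.
Hypothesis al_A : forall k : 'I_l.+1, tnth al k = A k.
Hypothesis be_B : forall k : 'I_l.+1, tnth be k = B k.
Local Notation C := R[i].
Local Notation D := (@shift_tuple R n d l t A B W).
Local Open Scope complex_scope.

Definition corner_row : 'I_(l.+1 * n) := mxtens_index (ord0 : 'I_l.+1, A 0).
Definition corner_col : 'I_(l.+1 * n) := mxtens_index (ord_max : 'I_l.+1, B l).

Definition path_blocks l' (w : l'.-tuple 'I_d) (p : {ffun 'I_l'.+1 -> 'I_l.+1}) (k : 'I_l')
    : 'M[C]_n :=
  block (D (tnth w k)) (p (widen_ord (leqnSn l') k)) (p (lift ord0 k)).

Definition id_path : {ffun 'I_l.+1 -> 'I_l.+1} := [ffun k => k].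

Lemma haag_shift_corner l' (w : l'.-tuple 'I_d) :
  (haag fhat w D) corner_row corner_col =
  \sum_(p : {ffun 'I_l'.+1 -> 'I_l.+1} | (p ord0 == ord0) && (p ord_max == ord_max))
     (TTmap fhat w (path_blocks w p)) (A 0) (B l).
Proof. by rewrite /haag mxE !mxtens_indexK /= summxE. Qed.

Lemma TTmap_eq0 l' (w : l'.-tuple 'I_d) (G : 'I_l' -> 'M[C]_n) k :
  G k = 0 -> TTmap fhat w G = 0.
Proof.
move=> Gk; rewrite /TTmap big1 // => al' _; rewrite big1 // => be' _.
by rewrite (chain_eq0 _ _ Gk) scaler0.
Qed.

Lemma path_blocks_neq0 l' (w : l'.-tuple 'I_d) (p : {ffun 'I_l'.+1 -> 'I_l.+1}) :
    p ord0 = ord0 -> p ord_max = ord_max -> (forall k, path_blocks w p k <> 0) ->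
  [/\ l' = l, (forall k, val (p k) = val k) & (forall k : 'I_l', tnth w k = W k)].
Proof.
move=> p0 p_max p_neq0.
have step k : [&& (p (widen_ord (leqnSn l') k) < l)%N,
    W (p (widen_ord (leqnSn l') k)) == tnth w k &
    p (lift ord0 k) == inord (p (widen_ord (leqnSn l') k)).+1].
  have := p_neq0 k; rewrite /path_blocks block_shift_tuple.
  by case: ifP => // /andP[/andP[-> ->] ->].
have p_id : forall k, val (p k) = val k.
  apply: unit_step_path_val; first by rewrite p0.
  move=> k; have /and3P[k_lt _ /eqP ->] := step k.
  by apply: inordK; rewrite ltnS.
split => // [|k]; first by have := p_id ord_max; rewrite p_max.
by have /and3P[_ /eqP <- _] := step k; rewrite p_id.
Qed.

Lemma haag_shift_corner_eq0 l' (w : l'.-tuple 'I_d) :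
    ~ (l' = l /\ forall k : 'I_l', tnth w k = W k) ->
  (haag fhat w D) corner_row corner_col = 0.
Proof.
move=> not_word; rewrite haag_shift_corner big1 // => p /andP[/eqP p0 /eqP p_max].
have [[k Gk]|G_neq0] := pselect (exists k, path_blocks w p k = 0).
  by rewrite (TTmap_eq0 _ Gk) mxE.
have [l'_eq _ w_W] := path_blocks_neq0 p0 p_max (fun k Gk => G_neq0 (ex_intro _ k Gk)).
by case: not_word.
Qed.

Lemma haag_shift_corner_word :
  (haag fhat om D) corner_row corner_col =
  (TTmap fhat om (path_blocks om id_path)) (A 0) (B l).
Proof.
rewrite haag_shift_corner (bigD1 id_path) /=; last by rewrite !ffunE !eqxx.
rewrite big1 ?addr0 // => p /andP[/andP[/eqP p0 /eqP p_max] p_neq].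
have [[k Gk]|G_neq0] := pselect (exists k, path_blocks om p k = 0).
  by rewrite (TTmap_eq0 _ Gk) mxE.
have [_ p_id _] := path_blocks_neq0 p0 p_max (fun k Gk => G_neq0 (ex_intro _ k Gk)).
by move/negP: p_neq; case; apply/eqP/ffunP => k; rewrite ffunE; apply: val_inj.
Qed.

Lemma path_blocks_id_path k :
  path_blocks om id_path k = t%:C *: delta_mx (B k) (A k.+1).
Proof.
rewrite /path_blocks !ffunE block_shift_tuple /= ltn_ord om_W eqxx /=.
by rewrite (_ : lift ord0 k == _) //; apply/eqP/val_inj; rewrite /= inordK // ltnS.
Qed.

Lemma nth_al k : (k < l.+1)%N -> nth (A 0) al k = A k.
Proof. by move=> k_lt; rewrite -(al_A (Ordinal k_lt)) (tnth_nth (A 0)). Qed.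

Lemma nth_be k : (k < l.+1)%N -> nth (A 0) be k = B k.
Proof. by move=> k_lt; rewrite -(be_B (Ordinal k_lt)) (tnth_nth (A 0)). Qed.

Lemma chain_shift_corner (al' be' : (l.+1).-tuple 'I_n) :
  (chain al' be' (path_blocks om id_path)) (A 0) (B l) =
  if (al' == al) && (be' == be) then t%:C ^+ l else 0.
Proof.
rewrite (chain_delta_mx _ _ (U := B) (V := fun k => A k.+1) (A 0) path_blocks_id_path).
rewrite !mxE; have [/andP[/eqP -> /eqP ->]|al_be_neq] := boolP ((al' == al) && (be' == be)).
  rewrite al_A be_B !eqxx /= mulr1 ifT //; apply/allP => k; rewrite mem_iota => k_lt.
  by rewrite nth_be ?nth_al ?eqxx // ltnS ltnW.
case: ifP => [/allP steps|_]; last by rewrite mul0r.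
have step k : (k < l)%N -> (nth (A 0) be' k == B k) && (A k.+1 == nth (A 0) al' k.+1).
  by move=> k_lt; apply: steps; rewrite mem_iota.
case: eqP => [a0|_]; last by rewrite mulr0.
case: eqP => [bl|_]; last by rewrite mulr0.
move: al_be_neq; rewrite negb_and => /orP[] /eqP[]; apply: eq_from_tnth.
  case=> -[|k] k_lt; first by rewrite al_A /= a0; congr tnth; apply: val_inj.
  rewrite al_A /=; have /andP[_ /eqP ->] := step k k_lt.
  by rewrite (tnth_nth (A 0)).
move=> [k k_lt]; rewrite be_B; have [k_ltl|k_gel] := ltnP k l.
  by have /andP[/eqP <- _] := step k k_ltl; rewrite (tnth_nth (A 0)).
have -> : Ordinal k_lt = ord_max by apply: val_inj; apply/eqP; rewrite eqn_leq k_gel -ltnS k_lt.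
by rewrite bl.
Qed.

Lemma TTmap_shift_corner :
  (TTmap fhat om (path_blocks om id_path)) (A 0) (B l) = t%:C ^+ l * fhat om al be.
Proof.
rewrite /TTmap summxE (bigD1 al) //= summxE (bigD1 be) //= !mxE chain_shift_corner !eqxx.
rewrite mulrC big1 ?addr0 => [|be' be'_neq]; last first.
  by rewrite mxE chain_shift_corner eqxx (negbTE be'_neq) mulr0.
rewrite big1 ?addr0 // => al' al'_neq; rewrite summxE big1 // => be' _.
by rewrite mxE chain_shift_corner (negbTE al'_neq) mulr0.
Qed.

Lemma TTsum_shift_corner (Y : 'I_d -> 'M[C]_n) L :
  (TTsum fhat Y (fun s => D s + ampl l.+1 (Y s)) L) corner_row corner_col =
  if (l < L)%N then t%:C ^+ l * fhat om al be else 0.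
Proof.
rewrite /TTsum (_ : (fun s => _) = D); last by apply: funext => s; rewrite addrK.
rewrite summxE -(big_ord1_eq +%R (fun=> t%:C ^+ l * fhat om al be)) [RHS]big_mkcond.
apply: eq_bigr => -[l' l'_lt] _ /=.
have [->|l'_neq] := eqVneq l' l.
  rewrite summxE (bigD1 om) //= haag_shift_corner_word TTmap_shift_corner.
  rewrite big1 ?addr0 // => w w_neq; apply: haag_shift_corner_eq0 => -[_ w_W].
  by move/eqP: w_neq; apply; apply: eq_from_tnth => k; rewrite w_W om_W.
rewrite summxE big1 // => w _; apply: haag_shift_corner_eq0 => -[l'_eq _].
by move/eqP: l'_neq.
Qed.

End ShiftCorner.

Section CoefficientBound.
Variables (R : realType) (d n : nat) (f : ncmap R d) (Y : 'I_d -> 'M[R[i]]_n).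
Variables (fhat : seq 'I_d -> seq 'I_n -> seq 'I_n -> R[i]) (r M t : R).
Hypothesis t_gt0 : 0 < t.
Hypothesis t_lt_r : t < r.
Hypothesis f_bounded : forall m, (0 < m)%N -> forall X : 'I_d -> 'M[R[i]]_(m * n),
  inball (m := m) Y r X -> opnorm (f X) <= M.
Hypothesis TT_cvg : forall m, (0 < m)%N -> forall X : 'I_d -> 'M[R[i]]_(m * n),
  inball (m := m) Y r X -> forall p q (eps : R), 0 < eps ->
  exists L0 : nat, forall L, (L0 <= L)%N ->
    normsq ((TTsum fhat Y X L) p q - f X p q) < eps.
Local Open Scope complex_scope.

Lemma coef_normsq_le (a b : 'I_n) l (nu : l.-tuple ('I_n * 'I_n * 'I_d)) : (0 < l)%N ->
  (t ^+ l) ^+ 2 * normsq (fab fhat a b nu) <= M ^+ 2.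
Proof.
move=> l_gt0.
have al_size : size (rcons (map (fun v => v.1.1) nu) a) == l.+1.
  by rewrite size_rcons size_map size_tuple.
have be_size : size (rcons (map (fun v => v.1.2) nu) b) == l.+1.
  by rewrite size_rcons size_map size_tuple.
pose al : (l.+1).-tuple 'I_n := Tuple al_size.
pose be : (l.+1).-tuple 'I_n := Tuple be_size.
pose om : l.-tuple 'I_d := map_tuple (fun v => v.2) nu.
pose W k := nth (tnth nu (Ordinal l_gt0)).2 om k.
pose D := shift_tuple l t (nth a al) (nth b be) W.
pose X s := D s + ampl l.+1 (Y s).
have om_W k : tnth om k = W k by rewrite (tnth_nth (tnth nu (Ordinal l_gt0)).2).
have al_A k : tnth al k = nth a al k by rewrite (tnth_nth a).
have be_B k : tnth be k = nth b be k by rewrite (tnth_nth b).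
have X_in : inball (m := l.+1) Y r X.
  rewrite /inball (_ : (fun s => X s - _) = D); last by apply: funext => s; rewrite addrK.
  exact: le_lt_trans (colnorm_shift_tuple_le _ _ _ _ (ltW t_gt0)) t_lt_r.
pose p := corner_row l (nth a al); pose q := corner_col l (nth b be).
have fX_corner : t%:C ^+ l * fhat om al be = f X p q.
  apply: (eventually_const_normsq_lim (L1 := l.+1) _ (TT_cvg (ltn0Sn l) X_in _ _)) => L l_lt.
  by rewrite (TTsum_shift_corner fhat t om_W al_A be_B) l_lt.
have := le_trans (sqrt_normsq_le_opnorm (f X) p q) (f_bounded (ltn0Sn l) X_in).
rewrite -fX_corner -rmorphXn normsq_realM => sqrt_le.
have M_ge0 : 0 <= M by exact: le_trans (sqrtr_ge0 _) sqrt_le.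
have coef_ge0 : 0 <= (t ^+ l) ^+ 2 * normsq (fab fhat a b nu).
  by rewrite mulr_ge0 ?sqr_ge0 ?normsq_ge0.
by rewrite -(sqr_sqrtr coef_ge0) ler_pXn2r ?nnegrE ?sqrtr_ge0.
Qed.

End CoefficientBound.

Lemma sum_normsq_le_geometric (R : realType) (V : finType) (g : seq V -> R[i]) (t M : R) l :
    0 < t -> (forall nu : l.-tuple V, (t ^+ l) ^+ 2 * normsq (g nu) <= M ^+ 2) -> (0 < l)%N ->
  \sum_(nu : l.-tuple V) normsq (g nu) <= (#|V|%:R * Num.max 1 (M ^+ 2) / t ^+ 2) ^+ l.
Proof.
move=> t_gt0 g_le l_gt0.
have tl_gt0 : 0 < (t ^+ 2) ^+ l by rewrite !exprn_gt0.
apply: le_trans (_ : \sum_(nu : l.-tuple V) M ^+ 2 / (t ^+ 2) ^+ l <= _).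
  by apply: ler_sum => nu _; rewrite ler_pdivlMr // mulrC -exprAC.
rewrite sumr_const card_tuple -(mulr_natl (M ^+ 2 / _)) natrX.
have -> : (#|V|%:R * Num.max 1 (M ^+ 2) / t ^+ 2) ^+ l =
    #|V|%:R ^+ l * (Num.max 1 (M ^+ 2) ^+ l / (t ^+ 2) ^+ l).
  by rewrite expr_div_n exprMn mulrA.
apply: ler_wpM2l; first by rewrite exprn_ge0.
apply: ler_wpM2r; first by rewrite invr_ge0 ltW.
by apply: le_trans (ler_eXnr l_gt0 _); rewrite le_max ?lexx ?orbT.
Qed.

Unset Implicit Arguments.

Theorem mainTheorem12 (R : realType) (d n : nat)
    (Om : ncset R d) (f : ncmap R d) (Y : 'I_d -> 'M[R[i]]_n) :
  nc_function Om f -> unif_analytic Om f -> Om n Y ->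
  forall fhat : seq 'I_d -> seq 'I_n -> seq 'I_n -> R[i],
  TT_expansion Om f Y fhat ->
  forall a b : 'I_n, (0 < radius (fab fhat a b))%E.
Proof.
move=> _ [_ f_loc_bounded] OmY fhat [r2 r2_gt0 TT_cvg] a b.
have [r1 r1_gt0 [M f_bounded]] := f_loc_bounded n Y OmY.
pose r := Num.min r1 r2.
have r_gt0 : 0 < r by rewrite lt_min r1_gt0 r2_gt0.
have r_le1 : r <= r1 by rewrite ge_min lexx.
have r_le2 : r <= r2 by rewrite ge_min lexx orbT.
have t_gt0 : 0 < r / 2 by rewrite divr_gt0.
have t_lt_r : r / 2 < r by rewrite ltr_pdivrMr // ltr_pMr // ltr1n.
apply: (radius_gt0 (K := #|{: 'I_n * 'I_n * 'I_d}|%:R * Num.max 1 (M ^+ 2) / (r / 2) ^+ 2)).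
  by rewrite divr_ge0 ?sqr_ge0 // mulr_ge0 // le_max ler01.
move=> l l_gt0.
apply: sum_normsq_le_geometric => // nu.
apply: (coef_normsq_le (f := f) (Y := Y) t_gt0 t_lt_r) l_gt0 => m m_gt0 X X_in.
  by have [_] := f_bounded m m_gt0 X (lt_le_trans X_in r_le1).
by have [_] := TT_cvg m m_gt0 X (lt_le_trans X_in r_le2).
Qed.
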